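(* In the changepoint model with negative-binomial segment lengths described in the context (with success probability $q_{old}$), for $0<j\le n$ and every $q\in(0,1)$, $$\sum_{i=n-j}^\infty P(S=i,C_n=j\mid Y_{1:n}=y_{1:n})\big(r\ln q+i\ln(1-q)\big)=\tilde c_{jn}\,r\ln q+\tilde c_{jn}\,\frac{\sum_{\ell=n-j}^\infty\ell\,\mathrm{NB}(\ell;q_{old},r)}{\sum_{\ell=n-j}^\infty\mathrm{NB}(\ell;q_{old},r)}\,\ln(1-q).$$
   Context: Let $\mathrm{NB}(\ell;q,r)=\binom{r-1+\ell}{\ell}q^r(1-q)^\ell$ ($\ell=0,1,2,\dots$) be the negative binomial probability mass function with success probability $q\in(0,1)$ and number of successes $r\in\mathbb N_{\ge1}$. Model (with $q_{old}\in(0,1)$): fix $n\ge1$ and data $y_1,\dots,y_n$; $(\mathbb X,\mathcal X)$, $(\mathbb Y,\mathcal Y)$ standard Borel, $\psi$ $\sigma$-finite on $\mathbb Y$, $\mathcal J$ a probability measure on $\mathbb X$. Let $q_{0i}\in[0,1]$ ($i\ge1$) be arbitrary and for $0<j<i$ let $q_{ji}=\sum_{\ell\ge i-j}\mathrm{NB}(\ell;q_{old},r)/\sum_{\ell\ge i-j-1}\mathrm{NB}(\ell;q_{old},r)$. The changepoint process $(C_i)_{i\ge1}$, $C_i\in\{0,\dots,i\}$, is a Markov chain with $P(C_1=0)=q_{01}$, $P(C_1=1)=1-q_{01}$, and for $i\ge2$: $P(C_i=j\mid C_{i-1}=j)=q_{ji}$, $P(C_i=i\mid C_{i-1}=j)=1-q_{ji}$;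 it is defined for all $i\ge1$. For $i=1,\dots,n$: $X_1\sim\mathcal J$; for $i\ge2$, $X_i\sim\mathcal J$ (fresh) if $C_i=i$ and $X_i=X_{i-1}$ if $C_i<i$; $Y_i$ depends on all other variables only through $X_i$ with density $p(Y_i=y\mid X_i=x)$ w.r.t. $\psi$; given $C_n$, the future chain $(C_k)_{k>n}$ is independent of $X_{1:n},Y_{1:n},C_{1:n-1}$. Assume $\int\prod_{\ell=j}^ip(Y_\ell=y_\ell\mid X_\ell=x)\mathcal J(dx)>0$ for $0<j\le i\le n$. Let $\tau=\min\{k>n:C_k=k\}$ and $S=\tau-1-C_n$. Let $\tilde c_{jn}=P(C_n=j\mid Y_{1:n}=y_{1:n})$. *)

From HB Require Import structures.
From mathcomp Require Import all_boot all_order all_algebra.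
From mathcomp Require Import all_classical all_reals all_analysis.
Set Implicit Arguments. Unset Strict Implicit. Unset Printing Implicit Defensive.
Import Order.TTheory GRing.Theory Num.Theory.
Import numFieldNormedType.Exports.
Local Open Scope classical_set_scope.
Local Open Scope ring_scope.

Section Changepoint.
Variable R : realType.

Definition NB (l : nat) (q : R) (r : nat) : R :=
  ('C(r.-1 + l, l))%:R * q ^+ r * (1 - q) ^+ l.

Definition tailNB (q : R) (r m : nat) : R :=
  limn (fun N => \sum_(m <= l < N) NB l q r).

Definition tailMeanNB (q : R) (r m : nat) : R :=
  limn (fun N => \sum_(m <= l < N) l%:R * NB l q r).

(* survival probability q_{ji}; q0 gives the arbitrary q_{0i} *)
Definition qsurv (q0 : nat -> R) (qold : R) (r : nat) (j i : nat) : R :=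
  if j == 0%N then q0 i
  else tailNB qold r (i - j) / tailNB qold r (i - j).-1.

(* transition probability P(C_i = j' | C_{i-1} = j) *)
Definition trans (q0 : nat -> R) (qold : R) (r : nat) (j j' i : nat) : R :=
  if (j < i)%N then
    (if j' == j then qsurv q0 qold r j i
     else if j' == i then 1 - qsurv q0 qold r j i else 0)
  else 0.

Definition init1 (q0 : nat -> R) (c : nat) : R :=
  if c == 0%N then q0 1%N else if c == 1%N then 1 - q0 1%N else 0.

(* a changepoint path (C_1, ..., C_n) is encoded as t : n.-tuple 'I_n.+1 ;
   cv t i = C_i for 1 <= i <= n *)
Definition cv (n : nat) (t : n.-tuple 'I_n.+1) (i : nat) : nat :=
  nat_of_ord (nth ord0 t i.-1).

Definition pathP (q0 : nat -> R) (qold : R) (r n : nat) (t : n.-tuple 'I_n.+1) : R :=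
  init1 q0 (cv t 1) *
  \prod_(2 <= i < n.+1) trans q0 qold r (cv t i.-1) (cv t i) i.

Definition segInt dX (X : measurableType dX) (Y : Type)
  (J : probability X R) (p : Y -> X -> R) (y : nat -> Y) (a b : nat) : \bar R :=
  (\int[J]_x (\prod_(a <= l < b.+1) p (y l) x)%:E)%E.

(* density of Y_{1:n} = y_{1:n} given C_{1:n} = t: product over the segments
   of the path (a segment ends at i when i = n or C_{i+1} = i+1; the segment
   ending at i starts at max(C_i, 1)), each segment having its own fresh
   X ~ J integrated out *)
Definition lik dX (X : measurableType dX) (Y : Type)
  (J : probability X R) (p : Y -> X -> R) (y : nat -> Y)
  (n : nat) (t : n.-tuple 'I_n.+1) : R :=
  \prod_(1 <= i < n.+1 | (i == n) || (cv t i.+1 == i.+1))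
     fine (segInt J p y (maxn (cv t i) 1) i).

Definition jointP dX (X : measurableType dX) (Y : Type)
  (J : probability X R) (p : Y -> X -> R) (y : nat -> Y)
  (q0 : nat -> R) (qold : R) (r n : nat) (t : n.-tuple 'I_n.+1) : R :=
  pathP q0 qold r t * lik J p y t.

Definition margY dX (X : measurableType dX) (Y : Type)
  (J : probability X R) (p : Y -> X -> R) (y : nat -> Y)
  (q0 : nat -> R) (qold : R) (r n : nat) : R :=
  \sum_(t : n.-tuple 'I_n.+1) jointP J p y q0 qold r t.

Definition ctilde dX (X : measurableType dX) (Y : Type)
  (J : probability X R) (p : Y -> X -> R) (y : nat -> Y)
  (q0 : nat -> R) (qold : R) (r n j : nat) : R :=
  (\sum_(t : n.-tuple 'I_n.+1 | cv t n == j) jointP J p y q0 qold r t)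
  / margY J p y q0 qold r n.

(* P(S = i | C_n = j) for the future chain (C_k)_{k > n}:
   S = i  iff  C_k = j for n < k <= j+i and C_{j+i+1} = j+i+1,
   which requires i >= n - j. *)
Definition futP (q0 : nat -> R) (qold : R) (r n j i : nat) : R :=
  if (n - j <= i)%N then
    (\prod_(n.+1 <= k < (j + i).+1) trans q0 qold r j j k) *
    trans q0 qold r j (j + i).+1 (j + i).+1
  else 0.

Definition condSC dX (X : measurableType dX) (Y : Type)
  (J : probability X R) (p : Y -> X -> R) (y : nat -> Y)
  (q0 : nat -> R) (qold : R) (r n j i : nat) : R :=
  (\sum_(t : n.-tuple 'I_n.+1 | cv t n == j)
      jointP J p y q0 qold r t * futP q0 qold r n j i)
  / margY J p y q0 qold r n.

End Changepoint.

(* Given C_n = j the future of the chain depends on j alone, so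
   P(S = i, C_n = j | y) = c~_jn P(S = i | C_n = j).  For i >= n - j the
   survival ratios q_jk telescope to P(S = i | C_n = j) = NB(i) / T(n - j),
   where T(m) = sum_{l >= m} NB(l): the residual run length is the negative
   binomial law conditioned on exceeding the current run.  The series is thus
   c~_jn / T(n - j) times a combination of the tails of sum NB(l) and
   sum l NB(l), which converge since the partial sums of the binomial series
   sum_l C(k + l, l) x^l are bounded by (1 - x)^-(k+1). *)

From HB Require Import structures.
From mathcomp Require Import all_boot all_order all_algebra.
From mathcomp Require Import all_classical all_reals all_analysis.
From mathcomp Require Import ring lra zify.
Import Order.TTheory GRing.Theory Num.Theory.
Import numFieldNormedType.Exports.
Local Open Scope classical_set_scope.
Local Open Scope ring_scope.

Section NonnegativeTails.
Context {R : realType} {f : nat -> R} {B : R}.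
Hypothesis f_ge0 : forall l, 0 <= f l.
Hypothesis psum_le : forall N, \sum_(l < N) f l <= B.

Lemma tail_psum_le m N : \sum_(m <= l < N) f l <= B.
Proof.
have [mN|/ltnW Nm] := leqP m N; last by rewrite big_geq // (le_trans _ (psum_le 0)) ?big_ord0.
apply: le_trans (psum_le N); rewrite -(big_mkord xpredT) (big_cat_nat (leq0n m) mN) /=.
by rewrite lerDr sumr_ge0.
Qed.

Lemma cvg_tail_psum m :
  (fun N => \sum_(m <= l < N) f l) @ \oo --> limn (fun N => \sum_(m <= l < N) f l).
Proof.
apply: nondecreasing_is_cvgn; first exact: nondecreasing_series.
by exists B => _ [N _ <-]; exact: tail_psum_le.
Qed.

Lemma tail_lim_recl m :
  limn (fun N => \sum_(m <= l < N) f l) = f m + limn (fun N => \sum_(m.+1 <= l < N) f l).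
Proof.
apply: cvg_lim => //.
have lim_split : (fun N => f m + \sum_(m.+1 <= l < N) f l) @ \oo -->
    f m + limn (fun N => \sum_(m.+1 <= l < N) f l).
  by apply: cvgD; [exact: cvg_cst | exact: cvg_tail_psum].
apply: cvg_trans lim_split.
apply: near_eq_cvg; near=> N; rewrite [in RHS]big_ltn //.
by near: N; exact: nbhs_infty_gt.
Unshelve. all: by end_near.
Qed.

Lemma tail_lim_ge_head m : f m <= limn (fun N => \sum_(m <= l < N) f l).
Proof.
rewrite tail_lim_recl lerDl; apply: limr_ge; first exact: cvg_tail_psum.
by near=> N; exact: sumr_ge0.
Unshelve. all: by end_near.
Qed.

End NonnegativeTails.

Definition negbin_psum {R : pzSemiRingType} (x : R) (k N : nat) : R :=
  \sum_(l < N) 'C(k + l, l)%:R * x ^+ l.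

Lemma negbin_psum0S (R : pzSemiRingType) (x : R) N :
  negbin_psum x 0 N.+1 = 1 + x * negbin_psum x 0 N.
Proof.
rewrite /negbin_psum big_ord_recl big_distrr /= binn expr0 mulr1.
by congr (_ + _); apply: eq_bigr => l _; rewrite !binn !mul1r exprS.
Qed.

Lemma negbin_psumSS (R : pzSemiRingType) (x : R) k N :
  negbin_psum x k.+1 N.+1 = negbin_psum x k N.+1 + x * negbin_psum x k.+1 N.
Proof.
rewrite /negbin_psum !big_ord_recl /= !addn0 !bin0 -addrA; congr (_ + _).
rewrite big_distrr -big_split /=; apply: eq_bigr => l _.
rewrite /bump /= !add1n !addnS binS natrD mulrDl addSn !mulr_natl.
by rewrite mulrnAr exprS.
Qed.

Lemma negbin_psum_le (R : realFieldType) (x : R) k N : 0 <= x < 1 ->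
  negbin_psum x k N <= (1 - x)^-1 ^+ k.+1.
Proof.
move=> /andP[x_ge0 x_lt1].
(* S_k(N) <= S_k(N+1) = S_(k-1)(N+1) + x S_k(N), and S <= b + x S forces S <= b / (1 - x). *)
have psum_le_psumS k' N' : negbin_psum x k' N' <= negbin_psum x k' N'.+1.
  by rewrite /negbin_psum big_ord_recr /= lerDl mulr_ge0 ?exprn_ge0.
have absorb (S b : R) : S <= b + x * S -> S <= b / (1 - x).
  by move=> Sb; rewrite ler_pdivlMr ?subr_gt0 //; lra.
case: N => [|N]; first by rewrite /negbin_psum big_ord0 exprn_ge0 // invr_ge0 subr_ge0 ltW.
elim: k => [|k IHk].
  rewrite expr1 -[_^-1]mul1r; apply: (absorb).
  by rewrite {1}negbin_psum0S lerD2l ler_wpM2l.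
rewrite exprS mulrC; apply: (absorb).
by rewrite {1}negbin_psumSS lerD ?ler_wpM2l.
Qed.

Lemma mul_bin_le_succ k l : (l * 'C(k + l, l) <= k.+1 * 'C(k.+1 + l, l))%N.
Proof.
have := mul_bin_down (k.+1 + l) l; rewrite addSn /= -addSn addnK => <-.
by rewrite leq_mul2r leq_addl orbT.
Qed.

Section NegativeBinomial.
Context {R : realType} {q : R} {r : nat}.
Hypothesis q01 : 0 < q < 1.

Lemma NB_gt0 l : 0 < NB l q r.
Proof.
have /andP[q_gt0 q_lt1] := q01.
by rewrite /NB !mulr_gt0 ?exprn_gt0 ?subr_gt0 // ltr0n bin_gt0 leq_addl.
Qed.

Lemma NB_ge0 l : 0 <= NB l q r.
Proof. exact/ltW/NB_gt0. Qed.

Lemma mean_NB_ge0 l : 0 <= l%:R * NB l q r.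
Proof. by rewrite mulr_ge0 ?NB_ge0. Qed.

Let one_minus_q01 : 0 <= 1 - q < 1.
Proof. by have /andP[? ?] := q01; apply/andP; split; lra. Qed.

Let q_neq0 : q != 0.
Proof. by have /andP[? _] := q01; rewrite gt_eqF. Qed.

Lemma psum_NB_le1 N : \sum_(l < N) NB l q r.+1 <= 1.
Proof.
have -> : \sum_(l < N) NB l q r.+1 = q ^+ r.+1 * negbin_psum (1 - q) r N.
  by rewrite /negbin_psum big_distrr; apply: eq_bigr => l _; rewrite /NB /= mulrAC mulrC.
have q_ge0 : 0 <= q by case/andP: q01 => /ltW.
apply: (@le_trans _ _ (q ^+ r.+1 * (1 - (1 - q))^-1 ^+ r.+1)).
  by rewrite ler_wpM2l ?exprn_ge0 ?negbin_psum_le.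
by rewrite opprB addrC subrK exprVn mulfV // expf_neq0.
Qed.

Lemma psum_mean_NB_le N : \sum_(l < N) l%:R * NB l q r.+1 <= r.+1%:R / q.
Proof.
have q_ge0 : 0 <= q by case/andP: q01 => /ltW.
have omq_ge0 : 0 <= 1 - q by case/andP: one_minus_q01.
apply: (@le_trans _ _ (r.+1%:R * q ^+ r.+1 * negbin_psum (1 - q) r.+1 N)).
  rewrite /negbin_psum big_distrr /=; apply: ler_sum => l _.
  have -> : l%:R * NB l q r.+1 = (l * 'C(r + l, l))%:R * (q ^+ r.+1 * (1 - q) ^+ l).
    by rewrite /NB natrM /=; ring.
  have -> : r.+1%:R * q ^+ r.+1 * ('C(r.+1 + l, l)%:R * (1 - q) ^+ l) =
      (r.+1 * 'C(r.+1 + l, l))%:R * (q ^+ r.+1 * (1 - q) ^+ l).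
    by rewrite natrM; ring.
  by rewrite ler_wpM2r ?ler_nat ?mul_bin_le_succ // mulr_ge0 ?exprn_ge0.
apply: (@le_trans _ _ (r.+1%:R * q ^+ r.+1 * (1 - (1 - q))^-1 ^+ r.+2)).
  by apply: ler_wpM2l; [rewrite mulr_ge0 ?exprn_ge0 | exact: negbin_psum_le].
by rewrite opprB addrC subrK exprVn (exprSr q r.+1) invfM mulrA mulfK // expf_neq0.
Qed.

End NegativeBinomial.

Section FutureSegment.
Variables (R : realType) (q0 : nat -> R) (qold : R) (r : nat).
Hypothesis qold01 : 0 < qold < 1.
Local Notation T := (tailNB qold r.+1).

Lemma tailNB_recl m : T m = NB m qold r.+1 + T m.+1.
Proof. exact: (tail_lim_recl (NB_ge0 qold01) (psum_NB_le1 qold01)). Qed.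

Lemma tailNB_gt0 m : 0 < T m.
Proof.
exact: lt_le_trans (NB_gt0 qold01 m) (tail_lim_ge_head (NB_ge0 qold01) (psum_NB_le1 qold01) m).
Qed.

Let tailNB_neq0 m : T m != 0.
Proof. by rewrite gt_eqF ?tailNB_gt0. Qed.

Variables (n j : nat).
Hypotheses (j_gt0 : (0 < j)%N) (j_le_n : (j <= n)%N).

Lemma qsurv_tailNB k : qsurv q0 qold r.+1 j k = T (k - j) / T (k - j).-1.
Proof. by rewrite /qsurv gtn_eqF. Qed.

Lemma prod_trans_stay d :
  \prod_(n.+1 <= k < (n + d).+1) trans q0 qold r.+1 j j k = T (n - j + d) / T (n - j).
Proof.
elim: d => [|d IHd]; first by rewrite addn0 big_geq // addn0 divff.
rewrite addnS big_nat_recr /=; last by lia.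
rewrite IHd /trans.
have -> : (j < (n + d).+1)%N by lia.
rewrite eqxx qsurv_tailNB.
have -> : ((n + d).+1 - j)%N = (n - j + d).+1 by lia.
by rewrite addnS /=; field; rewrite !tailNB_neq0.
Qed.

Lemma futP_NB i : (n - j <= i)%N -> futP q0 qold r.+1 n j i = NB i qold r.+1 / T (n - j).
Proof.
move=> i_ge; rewrite /futP i_ge.
have -> : (j + i = n + (i - (n - j)))%N by lia.
rewrite prod_trans_stay /trans.
have -> : (j < (n + (i - (n - j))).+1)%N by lia.
rewrite ifF; last by apply/eqP; lia.
rewrite eqxx qsurv_tailNB.
have -> : ((n + (i - (n - j))).+1 - j)%N = i.+1 by lia.
have -> : (n - j + (i - (n - j)))%N = i by lia.
by rewrite /= {1 2}tailNB_recl; field; rewrite -tailNB_recl !tailNB_neq0.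
Qed.

End FutureSegment.

Lemma condSC_ctilde (R : realType) dX (X : measurableType dX) (Y : Type)
    (J : probability X R) (p : Y -> X -> R) (y : nat -> Y)
    (q0 : nat -> R) (qold : R) (r n j i : nat) :
  condSC J p y q0 qold r n j i = ctilde J p y q0 qold r n j * futP q0 qold r n j i.
Proof. by rewrite /condSC /ctilde -big_distrl /= mulrAC. Qed.

Theorem mainTheorem15 (R : realType)
  (dX dY : measure_display) (X : measurableType dX) (Y : measurableType dY)
  (psi : {measure set Y -> \bar R}) (psi_sf : sigma_finite [set: Y] psi)
  (J : probability X R)
  (p : Y -> X -> R)
  (p_ge0 : forall yy x, 0 <= p yy x)
  (p_mx : forall yy, measurable_fun [set: X] (p yy))
  (p_my : forall x, measurable_fun [set: Y] (fun yy => p yy x))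
  (p_dens : forall x, (\int[psi]_yy (p yy x)%:E = 1)%E)
  (qold : R) (hqold : 0 < qold < 1) (r : nat) (hr : (0 < r)%N)
  (q0 : nat -> R) (hq0 : forall i, 0 <= q0 i <= 1)
  (n : nat) (hn : (0 < n)%N) (y : nat -> Y)
  (hpos : forall j i, (0 < j)%N -> (j <= i)%N -> (i <= n)%N ->
     (0 < segInt J p y j i < +oo)%E)
  (j : nat) (hj : (0 < j <= n)%N) (q : R) (hq : 0 < q < 1) :
  (fun N => \sum_(n - j <= i < N)
      condSC J p y q0 qold r n j i * (r%:R * ln q + i%:R * ln (1 - q)))
  @ \oo -->
  ctilde J p y q0 qold r n j * r%:R * ln q
  + ctilde J p y q0 qold r n j *
    (tailMeanNB qold r (n - j) / tailNB qold r (n - j))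
    * ln (1 - q).
Proof.
case/andP: hj => j_gt0 j_le_n; case: r hr => // r _.
set m := (n - j)%N; set c := ctilde _ _ _ _ _ _ _ _.
set a := r.+1%:R * ln q; set b := ln (1 - q).
have Tm_neq0 : tailNB qold r.+1 m != 0 by rewrite gt_eqF ?tailNB_gt0.
have -> : (fun N => \sum_(m <= i < N) condSC J p y q0 qold r.+1 n j i * (a + i%:R * b)) =
    fun N => c / tailNB qold r.+1 m * (a * \sum_(m <= i < N) NB i qold r.+1
                                      + b * \sum_(m <= i < N) i%:R * NB i qold r.+1).
  apply/funext => N; rewrite !big_distrr -big_split big_distrr /=.
  apply: eq_big_nat => i /andP[m_le_i _].
  by rewrite condSC_ctilde futP_NB // -/c -/m; field.
have -> : c * r.+1%:R * ln q + c * (tailMeanNB qold r.+1 m / tailNB qold r.+1 m) * b =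
    c / tailNB qold r.+1 m * (a * tailNB qold r.+1 m + b * tailMeanNB qold r.+1 m).
  by rewrite /a; field.
apply: cvgMl_tmp; apply: cvgD; apply: cvgMl_tmp.
  exact: (cvg_tail_psum (NB_ge0 hqold) (psum_NB_le1 hqold)).
exact: (cvg_tail_psum (mean_NB_ge0 hqold) (psum_mean_NB_le hqold)).
Qed.
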